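(* For each $n\ge0$ there is an isomorphism of $A_n$-bimodules $D_{n+1}\otimes_{A_{n+1}}I_n\cong A_n$, and consequently an isomorphism of $A$-bimodules $D\otimes_A I\cong A$, where $A=\bigoplus_{n\ge0}A_n$, $D=\bigoplus_{n\ge0}D_{n+1}$ and $I=\bigoplus_{n\ge0}I_n$.
   Context: $A_n$ is the nilCoxeter algebra: the unital $\mathbb{Q}$-algebra generated by $Y_1,\dots,Y_{n-1}$ with relations $Y_i^2=0$, $Y_iY_j=Y_jY_i$ for $|i-j|>1$, $Y_iY_{i+1}Y_i=Y_{i+1}Y_iY_{i+1}$. Let $\chi_n:A_n\to A_{n+1}$, $\chi_n(Y_i)=Y_i$; $D_{n+1}$ is $A_{n+1}$ as an $(A_n,A_{n+1})$-bimodule (left action via $\chi_n$, right by multiplication). Let $t_{n+1}:A_{n+1}\to A_n$ be the algebra homomorphism with $t_{n+1}(Y_i)=Y_i$ for $i<n$ and $t_{n+1}(Y_n)=0$. $I_n$ is the $(A_{n+1},A_n)$-bimodule equal to $A_n$ as a right $A_n$-module, with left $A_{n+1}$-action via $t_{n+1}$. An $(A_n,A_k)$-bimodule is regarded as an $A$-bimodule on which $A_i$ acts by $0$ on the left for $i\neq n$ and on the right for $i\ne k$. *)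

From HB Require Import structures.
From mathcomp Require Import all_boot all_algebra.
Set Implicit Arguments. Unset Strict Implicit. Unset Printing Implicit Defensive.
Import GRing.Theory.
Local Open Scope ring_scope.

Definition is_QAlgHom (A B : algType rat) (f : A -> B) : Prop :=
  [/\ (forall x y, f (x + y) = f x + f y),
      (forall (c : rat) x, f (c *: x) = c *: f x),
      (forall x y, f (x * y) = f x * f y) & f 1 = 1].

Definition nilCoxeter_rels (n : nat) (B : algType rat) (y : nat -> B) : Prop :=
  [/\ (forall i, (0 < i < n)%N -> y i * y i = 0),
      (forall i j, (0 < i < n)%N -> (0 < j < n)%N -> (i.+1 < j)%N || (j.+1 < i)%N ->
                   y i * y j = y j * y i)
    & (forall i, (0 < i)%N -> (i.+1 < n)%N ->
                 y i * y i.+1 * y i = y i.+1 * y i * y i.+1)].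

(** (A, Y) is the nilCoxeter algebra A_n: the unital Q-algebra generated by
    Y 1, ..., Y (n-1) subject to the nilCoxeter relations, i.e. the initial
    object among Q-algebras with n-1 elements satisfying these relations. *)
Definition is_nilCoxeter (n : nat) (A : algType rat) (Y : nat -> A) : Prop :=
  nilCoxeter_rels n Y /\
  forall (B : algType rat) (y : nat -> B), nilCoxeter_rels n y ->
    exists! f : A -> B, is_QAlgHom f /\ forall i, (0 < i < n)%N -> f (Y i) = y i.

(** M is a right R-module
    (action [ract]), N a left R-module (action [lact]); the carriers are
    given by predicates inM, inN, inR (subgroups of ambient types).
    [is_tensor_product ... beta] says that [beta : M x N -> P] is biadditive,
    R-balanced and universal among such maps into abelian groups, i.e. that
    the induced map M (x)_R N -> P is an isomorphism of abelian groups. *)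
Definition is_tensor_product (R M N P : Type)
    (inR : R -> Prop) (inM : M -> Prop) (inN : N -> Prop) (inP : P -> Prop)
    (addM : M -> M -> M) (addN : N -> N -> N) (addP : P -> P -> P)
    (ract : M -> R -> M) (lact : R -> N -> N) (beta : M -> N -> P) : Prop :=
  [/\ (forall m n, inM m -> inN n -> inP (beta m n)),
      (forall m1 m2 n, inM m1 -> inM m2 -> inN n ->
         beta (addM m1 m2) n = addP (beta m1 n) (beta m2 n)),
      (forall m n1 n2, inM m -> inN n1 -> inN n2 ->
         beta m (addN n1 n2) = addP (beta m n1) (beta m n2)),
      (forall m r n, inM m -> inR r -> inN n -> beta (ract m r) n = beta m (lact r n))
    & (forall (Q : zmodType) (f : M -> N -> Q),
         (forall m1 m2 n, inM m1 -> inM m2 -> inN n -> f (addM m1 m2) n = f m1 n + f m2 n) ->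
         (forall m n1 n2, inM m -> inN n1 -> inN n2 -> f m (addN n1 n2) = f m n1 + f m n2) ->
         (forall m r n, inM m -> inR r -> inN n -> f (ract m r) n = f m (lact r n)) ->
         (exists g : P -> Q,
            (forall p1 p2, inP p1 -> inP p2 -> g (addP p1 p2) = g p1 + g p2) /\
            (forall m n, inM m -> inN n -> g (beta m n) = f m n)) /\
         (forall g1 g2 : P -> Q,
            (forall p1 p2, inP p1 -> inP p2 -> g1 (addP p1 p2) = g1 p1 + g1 p2) ->
            (forall p1 p2, inP p1 -> inP p2 -> g2 (addP p1 p2) = g2 p1 + g2 p2) ->
            (forall m n, inM m -> inN n -> g1 (beta m n) = f m n) ->
            (forall m n, inM m -> inN n -> g2 (beta m n) = f m n) ->
            forall p, inP p -> g1 p = g2 p))].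

(** Direct sums: elements of (+)_n F n are finitely supported families. *)
Definition finsupp (F : nat -> zmodType) (x : forall n, F n) : Prop :=
  exists N, forall n, (N <= n)%N -> x n = 0.

Definition dsadd (F : nat -> zmodType) (x y : forall n, F n) : forall n, F n :=
  fun n => x n + y n.

Definition dsmul (F : nat -> algType rat) (x y : forall n, F n) : forall n, F n :=
  fun n => x n * y n.

Definition shiftF (F : nat -> algType rat) : nat -> algType rat := fun n => F n.+1.

(* Both [t n \o chi n] and [id] are algebra endomorphisms of A_n fixing the
   generators, so the universal property of A_n makes [chi n] a section of
   [t n].  Hence D_{n+1} (x)_{A_{n+1}} I_n is the base change
   A_{n+1} (x)_{A_{n+1}} A_n ~= A_n, d (x) x |-> t_n(d) x, which is left
   A_n-linear because t_n(chi_n(a) d) = a t_n(d).  The direct sum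
   A = (+)_n A_n has no unit, but the local units e_K = (1, ..., 1, 0, ...)
   suffice: a balanced map f factors through x |-> f(e_K, x) for any K
   bounding the support of x, independently of K since e_L e_K = e_K for
   K <= L. *)

From HB Require Import structures.
From mathcomp Require Import all_boot all_algebra.
From Stdlib Require Import ClassicalEpsilon FunctionalExtensionality.
Set Implicit Arguments. Unset Strict Implicit. Unset Printing Implicit Defensive.
Import GRing.Theory.
Local Open Scope ring_scope.

Lemma is_QAlgHom_id (B : algType rat) : is_QAlgHom (@id B).
Proof. by []. Qed.

Lemma is_QAlgHom_comp (B C D : algType rat) (f : B -> C) (g : C -> D) :
  is_QAlgHom f -> is_QAlgHom g -> is_QAlgHom (g \o f).
Proof.
case=> fD fZ fM f1 [gD gZ gM g1].
by split=> [x y|c x|x y|] /=; rewrite ?(fD, fZ, fM, f1, gD, gZ, gM, g1).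
Qed.

Lemma nilCoxeter_endo_id (n : nat) (B : algType rat) (Y : nat -> B) (h : B -> B) :
  is_nilCoxeter n Y -> is_QAlgHom h -> (forall i, (0 < i < n)%N -> h (Y i) = Y i) ->
  h =1 id.
Proof.
case=> rels univ hA hY; have [f [_ f_uniq]] := univ B Y rels.
have <- : f = id by apply: f_uniq; split; [exact: is_QAlgHom_id | by []].
by have -> : f = h by apply: f_uniq.
Qed.

Lemma nilCoxeter_hom_cancel (n : nat) (B C : algType rat) (YB : nat -> B) (YC : nat -> C)
    (c : B -> C) (s : C -> B) :
  is_nilCoxeter n YB -> is_QAlgHom c -> is_QAlgHom s ->
  (forall i, (0 < i < n)%N -> c (YB i) = YC i) ->
  (forall i, (0 < i < n)%N -> s (YC i) = YB i) ->
  cancel c s.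
Proof.
move=> nYB cA sA cY sY.
apply: (nilCoxeter_endo_id nYB (is_QAlgHom_comp cA sA)) => i i_n /=.
by rewrite cY // sY.
Qed.

Lemma QAlgHom_mul_action (B C : algType rat) (f : B -> C) : is_QAlgHom f ->
  [/\ forall r s x, f (r + s) * x = f r * x + f s * x,
      forall r x y, f r * (x + y) = f r * x + f r * y,
      forall r s x, f (r * s) * x = f r * (f s * x)
    & forall x, f 1 * x = x].
Proof.
case=> fD _ fM f1.
by split=> *; rewrite ?(fD, fM, f1, mulrDl, mulrDr, mulrA, mul1r).
Qed.

Section RegularTensor.

Variables (R : pzRingType) (N : zmodType) (act : R -> N -> N).
Hypotheses (actDl : forall r s x, act (r + s) x = act r x + act s x)
           (actDr : forall r x y, act r (x + y) = act r x + act r y)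
           (actM : forall r s x, act (r * s) x = act r (act s x))
           (act1 : forall x, act 1 x = x).

Lemma regular_tensor_product :
  is_tensor_product (fun _ : R => True) (fun _ : R => True) (fun _ : N => True)
    (fun _ : N => True) +%R +%R +%R *%R act act.
Proof.
split=> // Q f fDl fDr fM.
split=> [|g1 g2 _ _ g1f g2f x _].
- exists (f 1); split=> [x y _ _|m x _ _]; first exact: fDr.
  by rewrite -fM // mul1r.
- by rewrite -[x]act1 g1f // g2f.
Qed.

End RegularTensor.

Definition supp_bound (F : nat -> zmodType) (x : forall n, F n) (K : nat) : Prop :=
  forall n, (K <= n)%N -> x n = 0.

(* An arbitrary support bound chosen by [epsilon]: junk unless [finsupp x]. *)
Definition supp_size (F : nat -> zmodType) (x : forall n, F n) : nat :=
  epsilon (inhabits 0%N) (supp_bound x).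

Lemma supp_sizeP (F : nat -> zmodType) (x : forall n, F n) :
  finsupp x -> supp_bound x (supp_size x).
Proof. exact: epsilon_spec. Qed.

Lemma supp_bound_leq (F : nat -> zmodType) (x : forall n, F n) (K L : nat) :
  supp_bound x K -> (K <= L)%N -> supp_bound x L.
Proof. by move=> xK KL n Ln; apply: xK; apply: leq_trans Ln. Qed.

Lemma supp_bound_dsadd (F : nat -> zmodType) (x y : forall n, F n) (K : nat) :
  supp_bound x K -> supp_bound y K -> supp_bound (dsadd x y) K.
Proof. by move=> xK yK n Kn; rewrite /dsadd xK // yK // addr0. Qed.

Lemma finsupp_dsadd (F : nat -> zmodType) (x y : forall n, F n) :
  finsupp x -> finsupp y -> finsupp (dsadd x y).
Proof.
move=> [K xK] [L yL]; exists (maxn K L); apply: supp_bound_dsadd.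
- exact: supp_bound_leq xK (leq_maxl K L).
- exact: supp_bound_leq yL (leq_maxr K L).
Qed.

Section DirectSumTensor.

Variables (R : nat -> pzRingType) (N : nat -> zmodType).
Variable act : forall n, R n.+1 -> N n -> N n.
Hypotheses (actDl : forall n (r s : R n.+1) x, act (r + s) x = act r x + act s x)
           (actDr : forall n (r : R n.+1) x y, act r (x + y) = act r x + act r y)
           (actM : forall n (r s : R n.+1) x, act (r * s) x = act r (act s x))
           (act1 : forall n (x : N n), act 1 x = x).

Lemma act0r n (x : N n) : act (0 : R n.+1) x = 0.
Proof. by apply/(addrI (act (0 : R n.+1) x)); rewrite -actDl !addr0. Qed.

Lemma actr0 n (r : R n.+1) : act r 0 = 0.
Proof. by apply/(addrI (act r 0)); rewrite -actDr !addr0. Qed.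

Definition local_unit (K : nat) : forall n, R n := fun n => if (n <= K)%N then 1 else 0.

Definition unshift (d : forall n, R n.+1) : forall n, R n :=
  fun n => if n is k.+1 then d k else 0.

Lemma finsupp_local_unit K : finsupp (local_unit K).
Proof. by exists K.+1 => n Kn; rewrite /local_unit leqNgt Kn. Qed.

Lemma supp_bound_shifted_local_unit K :
  @supp_bound (fun n => R n.+1) (fun n => local_unit K n.+1) K.
Proof. by move=> n Kn; rewrite /local_unit ltnNge Kn. Qed.

Lemma finsupp_shifted_local_unit K :
  @finsupp (fun n => R n.+1) (fun n => local_unit K n.+1).
Proof. by exists K; apply: supp_bound_shifted_local_unit. Qed.

Lemma finsupp_unshift d : @finsupp (fun n => R n.+1) d -> finsupp (unshift d).
Proof. by move=> [K dK]; exists K.+1 => -[|n] // Kn; apply: dK. Qed.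

Lemma local_unit_mull K (d : forall n, R n.+1) : supp_bound d K ->
  (fun n => local_unit K n.+1 * d n) = d.
Proof.
move=> dK; apply: functional_extensionality_dep => n; rewrite /local_unit.
by case: ltnP => [_|Kn]; rewrite ?mul1r // mul0r dK.
Qed.

Lemma act_local_unit K (x : forall n, N n) : supp_bound x K ->
  (fun n => act (local_unit K n.+1) (x n)) = x.
Proof.
move=> xK; apply: functional_extensionality_dep => n; rewrite /local_unit.
by case: ltnP => [_|Kn]; rewrite ?act1 // act0r xK.
Qed.

Section BalancedMap.

Variables (Q : zmodType) (f : (forall n, R n.+1) -> (forall n, N n) -> Q).
Hypothesis fM : forall d r x, @finsupp (fun n => R n.+1) d -> @finsupp R r -> finsupp x ->
  f (fun n => d n * r n.+1) x = f d (fun n => act (r n.+1) (x n)).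

Lemma balanced_local_unit K L x : finsupp x -> supp_bound x K -> (K <= L)%N ->
  f (fun n => local_unit L n.+1) x = f (fun n => local_unit K n.+1) x.
Proof.
move=> fx xK KL; rewrite -{1}(act_local_unit xK) -fM //.
- by rewrite (local_unit_mull (supp_bound_leq (supp_bound_shifted_local_unit (K := K)) KL)).
- exact: finsupp_shifted_local_unit.
- exact: finsupp_local_unit.
Qed.

Definition dsum_tensor_lift (x : forall n, N n) : Q :=
  f (fun n => local_unit (supp_size x) n.+1) x.

Lemma dsum_tensor_liftE K x : finsupp x -> supp_bound x K ->
  dsum_tensor_lift x = f (fun n => local_unit K n.+1) x.
Proof.
move=> fx xK; rewrite /dsum_tensor_lift.
rewrite -(@balanced_local_unit _ (maxn K (supp_size x))) ?leq_maxr //; last exact: supp_sizeP.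
by rewrite (@balanced_local_unit K) ?leq_maxl.
Qed.

End BalancedMap.

Lemma dsum_regular_tensor_product :
  is_tensor_product (@finsupp R) (@finsupp (fun n => R n.+1)) (@finsupp N) (@finsupp N)
    (@dsadd (fun n => R n.+1)) (@dsadd N) (@dsadd N)
    (fun d r n => d n * r n.+1) (fun r x n => act (r n.+1) (x n))
    (fun d x n => act (d n) (x n)).
Proof.
split=> [d x _ [K xK]|d1 d2 x _ _ _|d x y _ _ _|d r x _ _ _|Q f _ fDr fM].
- by exists K => n Kn; rewrite xK // actr0.
- by apply: functional_extensionality_dep => n; rewrite /dsadd actDl.
- by apply: functional_extensionality_dep => n; rewrite /dsadd actDr.
- by apply: functional_extensionality_dep => n; rewrite actM.
split=> [|g1 g2 _ _ g1f g2f x fx]; last first.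
  have [K xK] := fx; have fuK := finsupp_shifted_local_unit K.
  by rewrite -(act_local_unit xK) g1f ?g2f.
exists (dsum_tensor_lift f); split=> [x y fx fy|d x fd fx].
- pose K := maxn (supp_size x) (supp_size y).
  have xK : supp_bound x K := supp_bound_leq (supp_sizeP fx) (leq_maxl _ _).
  have yK : supp_bound y K := supp_bound_leq (supp_sizeP fy) (leq_maxr _ _).
  rewrite (dsum_tensor_liftE fM (finsupp_dsadd fx fy) (supp_bound_dsadd xK yK)).
  rewrite (dsum_tensor_liftE fM fx xK) (dsum_tensor_liftE fM fy yK).
  by apply: fDr => //; exact: finsupp_shifted_local_unit.
- have [Kd dK] := fd; pose K := maxn Kd (supp_size x).
  have dK' : supp_bound d K := supp_bound_leq dK (leq_maxl _ _).
  have xK : supp_bound x K := supp_bound_leq (supp_sizeP fx) (leq_maxr _ _).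
  have dxK : supp_bound (fun n => act (d n) (x n)) K by move=> n Kn; rewrite xK // actr0.
  rewrite (dsum_tensor_liftE fM _ dxK); last by exists K.
  transitivity (f (fun n => local_unit K n.+1 * unshift d n.+1) x).
    by rewrite fM //; [exact: finsupp_shifted_local_unit | exact: finsupp_unshift].
  by rewrite -[in RHS](local_unit_mull dK').
Qed.

End DirectSumTensor.

Theorem mainTheorem11
  (A : nat -> algType rat) (Y : forall n, nat -> A n)
  (HA : forall n, is_nilCoxeter n (Y n))
  (chi : forall n, A n -> A n.+1)
  (Hchi : forall n, is_QAlgHom (chi n) /\
            forall i, (0 < i < n)%N -> chi n (Y n i) = Y n.+1 i)
  (t : forall n, A n.+1 -> A n)
  (Ht : forall n, [/\ is_QAlgHom (t n),
            (forall i, (0 < i < n)%N -> t n (Y n.+1 i) = Y n i)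
          & ((0 < n)%N -> t n (Y n.+1 n) = 0)]) :
  (* D_{n+1} (x)_{A_{n+1}} I_n ~= A_n as A_n-bimodules *)
  (forall n, exists beta : A n.+1 -> A n -> A n,
     [/\ is_tensor_product (fun _ : A n.+1 => True) (fun _ : A n.+1 => True)
           (fun _ : A n => True) (fun _ : A n => True)
           +%R +%R +%R
           (fun (d r : A n.+1) => d * r)          (* right A_{n+1}-action on D_{n+1} *)
           (fun (r : A n.+1) (x : A n) => t n r * x) (* left A_{n+1}-action on I_n *)
           beta,
         (forall (a : A n) (d : A n.+1) (x : A n), beta (chi n a * d) x = a * beta d x)
       & (forall (d : A n.+1) (x a : A n), beta d (x * a) = beta d x * a)]) /\
  (* D (x)_A I ~= A as A-bimodules, A = (+)_n A_n, D = (+)_n D_{n+1}, I = (+)_n I_n *)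
  (exists beta : (forall n, A n.+1) -> (forall n, A n) -> (forall n, A n),
     [/\ is_tensor_product (@finsupp A) (@finsupp (shiftF A)) (@finsupp A) (@finsupp A)
           (@dsadd (shiftF A)) (@dsadd A) (@dsadd A)
           (fun (d : forall n, A n.+1) (r : forall n, A n) => fun n => d n * r n.+1)
           (fun (r : forall n, A n) (x : forall n, A n) => fun n => t n (r n.+1) * x n)
           beta,
         (forall (a : forall n, A n) (d : forall n, A n.+1) (x : forall n, A n),
            finsupp a -> @finsupp (shiftF A) d -> finsupp x ->
            beta (fun n => chi n (a n) * d n) x = dsmul a (beta d x))
       & (forall (d : forall n, A n.+1) (x a : forall n, A n),
            @finsupp (shiftF A) d -> finsupp x -> finsupp a ->
            beta d (fun n => x n * a n) = dsmul (beta d x) a)]).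
Proof.
have tA n : is_QAlgHom (t n) by case: (Ht n).
have t_act n := QAlgHom_mul_action (tA n).
have tM n : {morph t n : x y / x * y} by case: (tA n).
have tK n : cancel (chi n) (t n).
  have [chiA chiY] := Hchi n; have [_ tY _] := Ht n.
  exact: nilCoxeter_hom_cancel (HA n) chiA (tA n) chiY tY.
split=> [n|].
  exists (fun d x => t n d * x); split=> [|a d x|d x a].
  - by have [? ? ? ?] := t_act n; exact: regular_tensor_product.
  - by rewrite tM tK mulrA.
  - by rewrite mulrA.
exists (fun d x n => t n (d n) * x n); split=> [|a d x _ _ _|d x a _ _ _].
- apply: (@dsum_regular_tensor_product A A (fun n r x => t n r * x)) => n;
    by have [? ? ? ?] := t_act n.
- by apply: functional_extensionality_dep => n; rewrite /dsmul tM tK mulrA.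
- by apply: functional_extensionality_dep => n; rewrite /dsmul mulrA.
Qed.
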